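(* Let $P$ be a shrub on a finite set $I$. Then the connected components of $P$ are exactly the parts of the partition $\pi_{f_P}$ of $I$.
   Context: A shrub $P$ on a finite set $I$ is a set $E$ of edges (unordered pairs of distinct elements of $I$) with a height function $h_P:I\to\mathbb{N}$; $j$ covers $i$ if $\{i,j\}\in E$ and $h_P(j)=h_P(i)+1$. Axioms: (1) edges join vertices whose heights differ by $1$; (2) every vertex of positive height covers some vertex; (3) no four distinct $a,b,c,d$ with $a$ covering $b$ and $c$, $c$ covering $d$, $\{b,d\}\notin E$; (4) no five distinct $a,b,c,d,e$ with $a$ covering $c,d$, $b$ covering $d,e$, $\{a,e\}\notin E$, $\{b,c\}\notin E$. Connected components are those of the graph $(I,E)$. A vertex is ramified if it covers at least two distinct vertices; two ramified vertices are equivalent if they cover the same set of vertices; $\operatorname{Ram}(P)$ is the set of equivalence classes, and for $r\in\operatorname{Ram}(P)$, $r^-$ is the common set of vertices covered by elements of $r$. For $S\subseteq I$, $\langle S\rangle_P$ is the set of $j\in I$ such that every descending path from $j$ (each vertex covering the next) to a vertex of height $0$ meets $S$. $P\setminus\langle r\rangle_P$ is the restriction of $P$ to $I\setminus\langle r\rangle_P$. With $u[S]=\sum_{k\in S}u_k$, $$f_P=\frac{1}{\prod_{i\in I}u[\langle\{i\}\rangle_P]}\prod_{r\in\operatorname{Ram}(P)}\frac{u[\langle r^-\rangle_{P\setminus\langle r\rangle_P}]}{u[\langle r^-\rangle_P]}\in\mathbb{Q}(u_i:i\in I).$$ For a rational function $f$ in the variables $(u_i)_{i\in I}$, written in lowest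 terms, $\pi_f$ is the partition of $I$ into classes of the equivalence relation generated by: $i\sim j$ if some irreducible factor of the denominator of $f$ involves both $u_i$ and $u_j$. *)

From HB Require Import structures.
From mathcomp Require Import all_boot all_order all_algebra.
From mathcomp Require Import boolp.
From mathcomp Require Import mpoly.
From Stdlib Require Import Relations.
Set Implicit Arguments. Unset Strict Implicit. Unset Printing Implicit Defensive.
Import GRing.Theory.
Local Open Scope ring_scope.

Notation "x %:F" := (@FracField.tofrac _ x).

(* The edge set E is a symmetric irreflexive relation (= a set of         *)
(* unordered pairs of distinct elements); h is the height function.       *)

Section Shrub.
Variables (n : nat) (E : rel 'I_n) (h : 'I_n -> nat).

Definition covers (j i : 'I_n) : bool := E i j && (h j == (h i).+1)%N.

Definition is_shrub : Prop :=
  (forall i j, E i j = E j i) /\ (forall i, ~~ E i i) /\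
  (* (1) *) (forall i j, E i j -> h i = (h j).+1 \/ h j = (h i).+1) /\
  (* (2) *) (forall i, (0 < h i)%N -> exists j, covers i j) /\
  (* (3) *) (forall a b c d : 'I_n, uniq [:: a; b; c; d] ->
              covers a b -> covers a c -> covers c d -> E b d) /\
  (* (4) *) (forall a b c d e : 'I_n, uniq [:: a; b; c; d; e] ->
                  covers a c -> covers a d -> covers b d -> covers b e ->
                  E a e \/ E b c).

Definition covered (v : 'I_n) : {set 'I_n} := [set w | covers v w].

Definition ramified (v : 'I_n) : bool := (1 < #|covered v|)%N.

Definition Ram : {set {set 'I_n}} :=
  [set [set w | ramified w && (covered w == covered v)] | v in [set v | ramified v]].

(* r^- : the common set of vertices covered by the elements of r *)
Definition rminus (r : {set 'I_n}) : {set 'I_n} := \bigcup_(v in r) covered v.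

Definition desc_path (V : {set 'I_n}) (j : 'I_n) (p : seq 'I_n) : bool :=
  (j \in V) && path (fun x y => [&& x \in V, y \in V & covers x y]) j p.

(* < S >_{P|V} : the j (in V) such that every descending path (in the
   restriction of P to V) from j to a vertex of height 0 meets S. *)
Definition gen (V S : {set 'I_n}) : {set 'I_n} :=
  [set j in V | `[< forall p : seq 'I_n, desc_path V j p ->
                     h (last j p) = 0%N -> has (mem S) (j :: p) >]].

Local Notation F := {fraction {mpoly rat[n]}}.

Definition usum (S : {set 'I_n}) : F := \sum_(k in S) ('X_k : {mpoly rat[n]})%:F.

Definition fP : F :=
  (\prod_(i : 'I_n) usum (gen setT [set i]))^-1 *
  \prod_(r in Ram) (usum (gen (~: gen setT r) (rminus r)) /
                    usum (gen setT (rminus r))).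

End Shrub.

Section PiF.
Variable n : nat.
Local Notation P := {mpoly rat[n]}.
Local Notation F := {fraction {mpoly rat[n]}}.

Definition mdvd (a b : P) : Prop := exists c : P, b = a * c.

Definition mirreducible (p : P) : Prop :=
  [/\ p != 0, p \isn't a GRing.unit &
      forall a b : P, p = a * b -> a \is a GRing.unit \/ b \is a GRing.unit].

Definition lowest_terms (f : F) (N D : P) : Prop :=
  [/\ D != 0, f = N%:F / D%:F &
      forall c : P, mdvd c N -> mdvd c D -> c \is a GRing.unit].

Definition involves (p : P) (i : 'I_n) : Prop :=
  exists m : 'X_{1..n}, p@_m != 0 /\ (0 < m i)%N.

Definition denom_rel (f : F) (i j : 'I_n) : Prop :=
  exists N D : P, lowest_terms f N D /\
    exists p : P, [/\ mirreducible p, mdvd p D, involves p i & involves p j].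

(* pi_f, as the equivalence relation generated by denom_rel f *)
Definition pi_rel (f : F) : relation 'I_n := clos_refl_sym_trans 'I_n (denom_rel f).

End PiF.

(* Every factor u[S] of f_P is a linear form, hence a prime element of
   Q[u], and u[S] determines S.  The numerator sets
   <r^->_{P \ <r>} never coincide with the denominator sets <{i}> and <r^->,
   so the product formula for f_P is already in lowest terms.  Consequently
   the irreducible factors of the denominator of f_P are, up to units, the
   forms u[<{i}>] and u[<r^->], and the variables such a form involves are the
   vertices of <{i}> resp. <r^->: each of them descends to i resp. into r^-,
   so lies in one connected component.  Conversely, if b covers a then b lies
   in <{a}> unless b is ramified, in which case a and b lie in <r^-> for the
   class r of b; so every edge lies in a single denominator set. *)

From Stdlib Require Import Relations.
From mathcomp Require Import all_boot all_algebra.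
From mathcomp Require Import boolp mpoly fraction.
Set Implicit Arguments. Unset Strict Implicit. Unset Printing Implicit Defensive.
Import GRing.Theory.

Local Open Scope ring_scope.

Lemma connect_clos_rst (T : finType) (e : rel T) (R : relation T) :
  ssrbool.symmetric e -> (forall x y, e x y -> R x y) ->
  (forall x y, R x y -> connect e x y) ->
  forall x y, connect e x y <-> clos_refl_sym_trans T R x y.
Proof.
move=> e_sym eR Re x y; split.
  case/connectP => p + ->; elim: p x => [|z p IHp] x /=; first by move=> _; apply: rst_refl.
  by case/andP => xz /IHp; apply: rst_trans; apply/rst_step/eR.
elim=> [{}x {}y /Re // | {}x | {}x {}y _ | x' y' z _ xy _ yz]; rewrite ?connect0 //.
  by rewrite (sym_connect_sym e_sym).
exact: connect_trans xy yz.
Qed.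

Lemma sum_indicator {R : pzSemiRingType} (T : finType) (S : {set T}) t :
  \sum_(k in S) ((k == t)%:R : R) = (t \in S)%:R.
Proof.
case tS: (t \in S); last by rewrite big1 // => k kS; case: eqP kS tS => // -> ->.
by rewrite (bigD1 t) //= eqxx big1 ?addr0 // => k /andP[_ /negbTE ->].
Qed.

Section Divisibility.
Variable n : nat.
Local Notation P := {mpoly rat[n]}.

Definition mprime (p : P) : Prop :=
  [/\ p != 0, p \isn't a GRing.unit &
      forall a b : P, mdvd p (a * b) -> mdvd p a \/ mdvd p b].

Definition mcoprime (a b : P) : Prop :=
  forall c : P, mdvd c a -> mdvd c b -> c \is a GRing.unit.

Lemma mdvd_refl (a : P) : mdvd a a.
Proof. by exists 1; rewrite mulr1. Qed.

Lemma mdvd_trans (a b c : P) : mdvd a b -> mdvd b c -> mdvd a c.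
Proof. by move=> [x ->] [y ->]; exists (x * y); rewrite mulrA. Qed.

Lemma mdvd_mulr (a b c : P) : mdvd a b -> mdvd a (b * c).
Proof. by move=> [x ->]; exists (x * c); rewrite mulrA. Qed.

Lemma mdvd_mull (a b c : P) : mdvd a b -> mdvd a (c * b).
Proof. by rewrite mulrC; apply: mdvd_mulr. Qed.

Lemma mdvd_mul2l (q a b : P) : q != 0 -> mdvd (q * a) (q * b) -> mdvd a b.
Proof. by move=> nz_q [c]; rewrite -mulrA => /(mulfI nz_q) ->; exists c. Qed.

Lemma mdvd_unit (a b : P) : mdvd a b -> b \is a GRing.unit -> a \is a GRing.unit.
Proof. by move=> [c ->]; rewrite unitrM => /andP[]. Qed.

Lemma mul_eq1_unit (a b : P) : a * b = 1 -> a \is a GRing.unit.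
Proof. by move=> ab1; have := unitr1 P; rewrite -ab1 unitrM => /andP[]. Qed.

Lemma mprime_mirreducible (p : P) : mprime p -> mirreducible p.
Proof.
move=> [nz_p nu_p prime_p]; split=> // a b def_p.
have [[c def_a]|[c def_b]] : mdvd p a \/ mdvd p b.
  by apply: prime_p; rewrite -def_p; apply: mdvd_refl.
- right; apply: (@mul_eq1_unit _ c); apply: (mulfI nz_p).
  by rewrite mulr1 {2}def_p def_a [b * c]mulrC mulrA.
- left; apply: (@mul_eq1_unit _ c); apply: (mulfI nz_p).
  by rewrite mulr1 {2}def_p def_b mulrCA.
Qed.

Lemma mdvd_mirreducible (p q : P) : p \isn't a GRing.unit -> mirreducible q ->
  mdvd p q -> exists2 u, u \is a GRing.unit & p = u * q.
Proof.
move=> nu_p [nz_q _ irr_q] [c def_q].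
have [|u_c] := irr_q _ _ def_q; first by rewrite (negbTE nu_p).
by exists c^-1; rewrite ?unitrV // def_q mulrCA mulVr ?mulr1.
Qed.

Lemma mprime_dvd_prod (p : P) (rs : seq P) :
  mprime p -> mdvd p (\prod_(r <- rs) r) -> exists2 r, r \in rs & mdvd p r.
Proof.
move=> [_ nu_p prime_p]; elim: rs => [|r rs IHrs].
  by rewrite big_nil => /mdvd_unit /(_ (unitr1 _)); rewrite (negbTE nu_p).
rewrite big_cons => /prime_p [p_r | /IHrs[r' r'_rs p_r']].
  by exists r; rewrite ?mem_head.
by exists r'; rewrite // in_cons r'_rs orbT.
Qed.

Lemma mirreducible_dvd_prod (p : P) (qs : seq P) :
  {in qs, forall q, mprime q} -> mirreducible p ->
  mdvd p (\prod_(q <- qs) q) -> exists2 q, q \in qs & mdvd p q.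
Proof.
move=> + [nz_p nu_p irr_p]; elim: qs => [|q qs IHqs] qs_prime.
  by rewrite big_nil => /mdvd_unit /(_ (unitr1 _)); rewrite (negbTE nu_p).
have [nz_q nu_q prime_q] := qs_prime q (mem_head _ _).
rewrite big_cons => -[k def_qs].
have [[c def_p]|[c def_k]] : mdvd q p \/ mdvd q k.
  by apply: prime_q; rewrite -def_qs; apply/mdvd_mulr/mdvd_refl.
- exists q; rewrite ?mem_head //.
  have [u_q | u_c] := irr_p _ _ def_p; first by rewrite u_q in nu_q.
  by exists c^-1; rewrite def_p (mulrK u_c).
- have qs_prime' : {in qs, forall q, mprime q}.
    by move=> q' q'_qs; apply: qs_prime; rewrite in_cons q'_qs orbT.
  have p_qs : mdvd p (\prod_(q <- qs) q).
    by apply: (mdvd_mul2l nz_q); rewrite def_qs def_k mulrCA mulrA; apply/mdvd_mulr/mdvd_refl.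
  have [q' q'_qs p_q'] := IHqs qs_prime' p_qs.
  by exists q'; rewrite // in_cons q'_qs orbT.
Qed.

Lemma mcoprime_prod (qs rs : seq P) :
  {in qs, forall q, mprime q} -> {in qs & rs, forall q r, ~ mdvd q r} ->
  mcoprime (\prod_(q <- qs) q) (\prod_(r <- rs) r).
Proof.
elim: qs => [|q qs IHqs] qs_prime qs_rs c.
  by rewrite big_nil => /mdvd_unit /(_ (unitr1 _)).
have [nz_q nu_q prime_q] := qs_prime q (mem_head _ _).
rewrite big_cons => -[k def_qs] c_rs.
have [q_c|[k' def_k]] : mdvd q c \/ mdvd q k.
  by apply: prime_q; rewrite -def_qs; apply/mdvd_mulr/mdvd_refl.
- have [r r_rs q_r] := mprime_dvd_prod (qs_prime q (mem_head _ _)) (mdvd_trans q_c c_rs).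
  by have := qs_rs q r (mem_head _ _) r_rs.
- apply: IHqs c_rs.
  + by move=> q' q'_qs; apply: qs_prime; rewrite in_cons q'_qs orbT.
  + by move=> q' r q'_qs; apply: qs_rs; rewrite in_cons q'_qs orbT.
  + apply: (mdvd_mul2l nz_q); rewrite def_qs def_k mulrCA mulrA.
    exact/mdvd_mulr/mdvd_refl.
Qed.

Lemma mcoprime_dvd_prod (qs : seq P) (N D X : P) :
  {in qs, forall q, mprime q} -> mcoprime N D ->
  N * \prod_(q <- qs) q = X * D -> mdvd D (\prod_(q <- qs) q).
Proof.
elim: qs D X => [|q qs IHqs] D X qs_prime ND.
  rewrite big_nil mulr1 => def_N.
  have u_D : D \is a GRing.unit.
    by apply: ND; [rewrite def_N; apply/mdvd_mull/mdvd_refl | apply: mdvd_refl].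
  by exists D^-1; rewrite mulrV.
have qs_prime' : {in qs, forall q, mprime q}.
  by move=> q' q'_qs; apply: qs_prime; rewrite in_cons q'_qs orbT.
have [nz_q nu_q prime_q] := qs_prime q (mem_head _ _).
rewrite big_cons => def_XD.
have [[c def_X]|[c def_D]] : mdvd q X \/ mdvd q D.
  by apply: prime_q; rewrite -def_XD; apply/mdvd_mull/mdvd_mulr/mdvd_refl.
- apply/mdvd_mull/(IHqs D c qs_prime' ND)/(mulfI nz_q).
  by rewrite mulrCA def_XD def_X mulrA.
- have Nc : mcoprime N c.
    by move=> d dN dc; apply: ND; rewrite // def_D; apply: mdvd_mull.
  have [|d def_d] := IHqs c X qs_prime' Nc.
    by apply: (mulfI nz_q); rewrite mulrCA def_XD def_D mulrCA.
  by exists d; rewrite def_D def_d mulrA.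
Qed.

End Divisibility.

Section LinearForms.
Variable n : nat.
Local Notation P := {mpoly rat[n]}.

Definition linform (S : {set 'I_n}) : P := \sum_(k in S) 'X_k.

Lemma meval_linform v S : meval v (linform S) = \sum_(k in S) v k.
Proof. by rewrite raddf_sum; apply: eq_bigr => k _; apply: mevalXU. Qed.

Lemma linform_neq0 S : S != set0 -> linform S != 0.
Proof.
case/set0Pn => k kS; apply/eqP => S0.
have := @sum_indicator rat _ S k; rewrite -meval_linform S0 meval0 kS => /eqP.
by rewrite eq_sym oner_eq0.
Qed.

Lemma linform_nunit S : linform S \isn't a GRing.unit.
Proof.
apply/negP => /unitrP[a [_ aS1]].
have := congr1 (meval (fun _ => 0)) aS1.
by rewrite mevalM meval_linform big1 // mul0r meval1 => /eqP; rewrite eq_sym oner_eq0.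
Qed.

Lemma mcoeff_linform S m : (linform S)@_m = \sum_(k in S) (U_(k)%MM == m)%:R.
Proof. by rewrite linear_sum /=; apply: eq_bigr => k _; rewrite mcoeffX. Qed.

Lemma involves_linform S i : involves (linform S) i <-> i \in S.
Proof.
split=> [[m [Sm_neq0 mi_gt0]] | iS].
  apply: contraLR Sm_neq0 => iNS; rewrite mcoeff_linform big1 // => k kS.
  by case: eqP => // km; move: mi_gt0; rewrite -km mnm1E; case: eqP kS iNS => // -> ->.
exists U_(i)%MM; rewrite mnm1E eqxx; split=> //.
rewrite linear_sum /=; under eq_bigr do rewrite mcoeffXU.
by rewrite sum_indicator iS oner_eq0.
Qed.

Lemma involves_unitl (u p : P) i :
  u \is a GRing.unit -> involves (u * p) i <-> involves p i.
Proof.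
(* In {mpoly rat[n]} the units are the nonzero constants. *)
case/andP => /eqP def_u u0_unit.
have u0_neq0 : u@_0 != 0 by apply: contraTneq u0_unit => ->; rewrite unitr0.
by rewrite def_u; split=> -[m [pm_neq0 mi]]; exists m; split=> //;
  move: pm_neq0; rewrite mcoeffCM mulf_eq0 ?negb_or ?u0_neq0 // => /andP[].
Qed.

(* The substitution u_k := - u[S \ k] kills u[S], and a - subst_k a is a
   multiple of u[S]; so u[S] divides a iff subst_k a = 0, and subst_k is a
   ring morphism into a domain. *)
Section LinearFormIsPrime.
Variables (S : {set 'I_n}) (k : 'I_n).
Hypothesis kS : k \in S.

Let subst_k (a : P) : P :=
  a \mPo [tuple (if i == k then - linform (S :\ k) else 'X_i) | i < n].

Let subst_kD a b : subst_k (a + b) = subst_k a + subst_k b.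
Proof. exact: raddfD. Qed.

Let subst_kM a b : subst_k (a * b) = subst_k a * subst_k b.
Proof. exact: rmorphM. Qed.

Let subst_kX i : subst_k 'X_i = if i == k then - linform (S :\ k) else 'X_i.
Proof. by rewrite /subst_k comp_mpolyXU -tnth_nth tnth_mktuple. Qed.

Let linform_split : linform S = 'X_k + linform (S :\ k).
Proof.
by rewrite /linform (bigD1 k) //=; congr (_ + _); apply: eq_bigl => i; rewrite !inE andbC.
Qed.

Let subst_k_linform : subst_k (linform S) = 0.
Proof.
have fix_rest : subst_k (linform (S :\ k)) = linform (S :\ k).
  rewrite /subst_k raddf_sum; apply: eq_bigr => i; rewrite !inE => /andP[ki _].
  by have := subst_kX i; rewrite (negbTE ki).
by rewrite linform_split subst_kD subst_kX eqxx fix_rest addNr.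
Qed.

Let linform_dvd_sub_subst a : mdvd (linform S) (a - subst_k a).
Proof.
pose Q (x : P) := mdvd (linform S) (x - subst_k x).
have QD x y : Q x -> Q y -> Q (x + y).
  move=> [c def_x] [d def_y]; exists (c + d).
  by rewrite subst_kD mulrDr -def_x -def_y opprD addrACA.
have QM x y : Q x -> Q y -> Q (x * y).
  move=> [c def_x] [d def_y]; exists (c * y + subst_k x * d).
  by rewrite subst_kM mulrDr mulrA -def_x mulrCA -def_y mulrBl mulrBr addrA subrK.
have QC c : Q c%:MP by exists 0; rewrite /Q /subst_k comp_mpolyC subrr mulr0.
have QX i : Q 'X_i.
  rewrite /Q subst_kX; case: eqP => [->|_]; last by exists 0; rewrite subrr mulr0.
  by exists 1; rewrite mulr1 opprK linform_split.
apply: (@mpolyind _ _ Q) => [|c m b _ _ Qb]; first by rewrite -mpolyC0.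
apply: (QD _ _ _ Qb); rewrite -mul_mpolyC mpolyXE_id; apply: (QM) => //.
apply: (big_ind Q); [by rewrite -mpolyC1 | exact: (QM) |] => i _.
by elim: (m i) => [|e IHe]; rewrite ?expr0 -?mpolyC1 // exprS; apply: (QM).
Qed.

Let linform_dvdP a : mdvd (linform S) a <-> subst_k a = 0.
Proof.
split=> [[c ->] | subst_a0]; first by rewrite subst_kM subst_k_linform mul0r.
by have := linform_dvd_sub_subst a; rewrite subst_a0 subr0.
Qed.

Lemma linform_prime : mprime (linform S).
Proof.
split; [by apply/linform_neq0/set0Pn; exists k | exact: linform_nunit |].
move=> a b; rewrite !linform_dvdP subst_kM => /eqP; rewrite mulf_eq0.
by case/orP => /eqP; [left | right].
Qed.

End LinearFormIsPrime.

Lemma linform_dvd_eq S T : T != set0 -> mdvd (linform S) (linform T) -> S = T.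
Proof.
(* Every zero of u[S] is a zero of u[T]; test this on indicator vectors. *)
move=> /set0Pn[t tT] [c def_T].
have vanish (v : 'I_n -> rat) :
    \sum_(k in S) v k = 0 -> \sum_(k in T) v k = 0.
  by move=> Sv0; rewrite -(meval_linform v T) def_T mevalM meval_linform Sv0 mul0r.
have sub_S x : x \in T -> x \in S.
  apply: contraTT => xNS; have := vanish (fun k => (k == x)%:R).
  rewrite !sum_indicator (negbTE xNS).
  by case: (x \in T) => // /(_ erefl) /eqP; rewrite oner_eq0.
apply/setP => x; apply/idP/idP => [xS|]; last exact: sub_S.
apply: contraT => xNT; have := vanish (fun k => (k == t)%:R - (k == x)%:R).
rewrite !sumrB !sum_indicator (negbTE xNT) xS (sub_S t tT) tT subrr subr0.
by move=> /(_ erefl) /eqP; rewrite oner_eq0.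
Qed.

Lemma linform_primes (Ss : seq {set 'I_n}) :
  {in Ss, forall S, S != set0} -> {in map linform Ss, forall q, mprime q}.
Proof. by move=> Ss_neq0 _ /mapP[S /Ss_neq0 /set0Pn[k kS] ->]; apply: linform_prime kS. Qed.

Lemma prod_linform (Ss : seq {set 'I_n}) :
  \prod_(S <- Ss) linform S = \prod_(q <- map linform Ss) q.
Proof. by rewrite big_map. Qed.

Lemma usum_linform S : usum S = (linform S)%:F.
Proof. by rewrite /usum rmorph_sum. Qed.

End LinearForms.

Section Shrubs.
Variables (n : nat) (E : rel 'I_n) (h : 'I_n -> nat).

Lemma mem_gen (V S : {set 'I_n}) x : S \subset V -> x \in S -> x \in gen E h V S.
Proof.
move=> SV xS; rewrite inE (subsetP SV _ xS) /=.
by apply/asboolP => p _ _; rewrite /= xS.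
Qed.

Lemma covered_sub_mem_gen (S : {set 'I_n}) z x :
  covers E h z x -> covered E h z \subset S -> z \in gen E h setT S.
Proof.
move=> /andP[_ /eqP hz] zS; rewrite inE in_setT /=; apply/asboolP => -[|w p] /=.
  by move=> _ h0; move: hz; rewrite h0.
case/andP=> _ /andP[/and3P[_ _ zw] _] _.
by rewrite (subsetP zS w) ?orbT // inE.
Qed.

Definition rclass (v : 'I_n) : {set 'I_n} :=
  [set w | ramified E h w && (covered E h w == covered E h v)].

Lemma RamP r : r \in Ram E h -> exists2 v, ramified E h v & r = rclass v.
Proof. by case/imsetP => v; rewrite inE => v_ram ->; exists v. Qed.

Lemma rclass_Ram v : ramified E h v -> rclass v \in Ram E h.
Proof. by move=> v_ram; apply/imsetP; exists v; rewrite ?inE. Qed.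

Lemma mem_rclass v : ramified E h v -> v \in rclass v.
Proof. by move=> v_ram; rewrite inE v_ram eqxx. Qed.

Lemma rminus_rclass v : ramified E h v -> rminus E h (rclass v) = covered E h v.
Proof.
move=> v_ram; apply/setP => x; apply/bigcupP/idP => [[w] | xv].
  by rewrite inE => /andP[_ /eqP ->].
by exists v; rewrite ?mem_rclass.
Qed.

Definition vertex_gen (i : 'I_n) : {set 'I_n} := gen E h setT [set i].
Definition ram_gen (r : {set 'I_n}) : {set 'I_n} := gen E h setT (rminus E h r).
Definition ram_gen_cut (r : {set 'I_n}) : {set 'I_n} :=
  gen E h (~: gen E h setT r) (rminus E h r).

Lemma mem_vertex_gen i : i \in vertex_gen i.
Proof. by rewrite mem_gen ?subsetT ?set11. Qed.

Lemma covered_sub_ram_gen v : ramified E h v -> covered E h v \subset ram_gen (rclass v).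
Proof.
by move=> v_ram; apply/subsetP => x xv; rewrite /ram_gen rminus_rclass // mem_gen ?subsetT.
Qed.

Hypothesis shrub : is_shrub E h.

Lemma shrub_sym : ssrbool.symmetric E.
Proof. by case: shrub. Qed.

Lemma covers_edge z x : covers E h z x -> E z x.
Proof. by case/andP; rewrite shrub_sym. Qed.

Lemma covers_height z x : covers E h z x -> h z = (h x).+1.
Proof. by case/andP => _ /eqP. Qed.

Lemma edge_covers a b : E a b -> covers E h a b \/ covers E h b a.
Proof.
case: shrub => _ [_ [height_step _]] ab.
case: (height_step a b ab) => hab; [left | right].
  by rewrite /covers shrub_sym ab hab eqxx.
by rewrite /covers ab hab eqxx.
Qed.

Lemma exists_ground_path z : exists p, desc_path E h setT z p && (h (last z p) == 0)%N.
Proof.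
case: shrub => _ [_ [_ [has_cover _]]].
elim: {z}(h z) {-2}z (erefl (h z)) => [|k IHk] z hz.
  by exists [::]; rewrite /desc_path in_setT /= hz.
have [w zw] : exists w, covers E h z w by apply: has_cover; rewrite hz.
have [|p /andP[wp pl]] := IHk w; first by apply: succn_inj; rewrite -hz (covers_height zw).
by exists (w :: p); rewrite /= pl andbT; move: wp; rewrite /desc_path /= !in_setT zw.
Qed.

Definition descends_to (z y : 'I_n) : Prop :=
  [/\ connect E z y, (h y <= h z)%N & (h y = h z -> y = z)].

Lemma desc_path_descends V z p y : desc_path E h V z p -> y \in z :: p -> descends_to z y.
Proof.
elim: p z => [|x p IHp] z.
  by move=> _; rewrite inE => /eqP ->; split => //; apply: connect0.
case/andP => zV /= /andP[/and3P[_ xV zx] xp].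
rewrite in_cons => /orP[/eqP -> | yp]; first by split => //; apply: connect0.
have xp' : desc_path E h V x p by rewrite /desc_path xV.
have [xy hyx _] := IHp x xp' yp.
have hz := covers_height zx.
split; first exact: connect_trans (connect1 (covers_edge zx)) xy.
  by rewrite hz leqW.
by move=> hyz; move: hyx; rewrite hyz hz ltnn.
Qed.

Lemma gen_descends V S z p : z \in gen E h V S ->
  desc_path E h V z p -> h (last z p) = 0%N -> exists2 y, y \in S & descends_to z y.
Proof.
rewrite inE => /andP[_ /asboolP zS] zp pl.
have /hasP[y yp yS] := zS p zp pl.
by exists y => //; apply: desc_path_descends zp yp.
Qed.

Lemma gen_setT_descends S z : z \in gen E h setT S -> exists2 y, y \in S & descends_to z y.
Proof.
by move=> zS; have [p /andP[zp /eqP pl]] := exists_ground_path z; apply: gen_descends zS zp pl.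
Qed.

Lemma notin_gen_setT (r : {set 'I_n}) z p :
  desc_path E h setT z p -> h (last z p) = 0%N ->
  ~~ has (mem r) (z :: p) -> z \in ~: gen E h setT r.
Proof.
by move=> zp pl; rewrite inE; apply: contra; rewrite inE => /andP[_ /asboolP /(_ p zp pl)].
Qed.

(* Every suffix of a ground path avoiding r avoids r too, so the whole path
   stays outside <r>. *)
Lemma desc_path_outside_gen (r : {set 'I_n}) z p :
  desc_path E h setT z p -> h (last z p) = 0%N ->
  ~~ has (mem r) (z :: p) -> desc_path E h (~: gen E h setT r) z p.
Proof.
elim: p z => [|x p IHp] z zp pl zpr; have zV := notin_gen_setT zp pl zpr.
  by rewrite /desc_path zV.
move: zp zpr => /andP[_ /= /andP[/and3P[_ _ zx] xp]] /norP[_ xpr].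
have xp' : desc_path E h setT x p by rewrite /desc_path in_setT.
have /andP[xV xp_out] := IHp x xp' pl xpr.
by rewrite /desc_path /= zV xV zx xp_out.
Qed.

Lemma gen_cut_descends (r S : {set 'I_n}) z : z \in gen E h (~: gen E h setT r) S ->
  exists2 y, y \in S & descends_to z y.
Proof.
move=> zS; have := zS; rewrite !inE /= => /andP[/asboolPn /existsNP[p]].
move=> /not_implyP[zp /not_implyP[pl /negP zpr]] _.
exact: gen_descends zS (desc_path_outside_gen zp pl zpr) pl.
Qed.

Lemma covered_height v x : x \in covered E h v -> h v = (h x).+1.
Proof. by rewrite inE => /covers_height. Qed.

Lemma covered_same_height v x y :
  x \in covered E h v -> y \in covered E h v -> h x = h y.
Proof. by move=> /covered_height hx /covered_height; rewrite hx => /succn_inj. Qed.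

Lemma covered_notin_gen (r : {set 'I_n}) x :
  (forall w, w \in r -> covers E h w x) -> x \notin gen E h setT r.
Proof.
move=> r_x; apply/negP => /gen_setT_descends[w /r_x /covers_height hw [_ hwx _]].
by move: hwx; rewrite hw ltnn.
Qed.

Lemma covered_sub_ram_gen_cut v :
  ramified E h v -> covered E h v \subset ram_gen_cut (rclass v).
Proof.
move=> v_ram; rewrite /ram_gen_cut rminus_rclass //; apply/subsetP => x xv.
apply: mem_gen xv; apply/subsetP => y yv; rewrite inE covered_notin_gen // => w.
by rewrite inE => /andP[_ /eqP wv]; move: yv; rewrite -wv inE.
Qed.

Lemma ram_gen_descends v z : ramified E h v -> z \in ram_gen (rclass v) ->
  exists2 y, y \in covered E h v & descends_to z y.
Proof. by move=> v_ram; rewrite /ram_gen rminus_rclass //; apply: gen_setT_descends. Qed.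

Lemma ram_gen_cut_descends v z : ramified E h v -> z \in ram_gen_cut (rclass v) ->
  exists2 y, y \in covered E h v & descends_to z y.
Proof. by move=> v_ram; rewrite -(rminus_rclass v_ram); apply: gen_cut_descends. Qed.

Lemma vertex_gen_neq_ram_gen_cut i v :
  ramified E h v -> vertex_gen i != ram_gen_cut (rclass v).
Proof.
(* Both vertices b != b' covered by v would have to descend to i without
   going down, forcing b = i = b'. *)
move=> v_ram; apply/eqP => gen_eq.
have [b [b' [bv b'v neq_bb']]] := card_gt1P v_ram.
have i_cut : i \in ram_gen_cut (rclass v) by rewrite -gen_eq mem_vertex_gen.
have [y yv [_ hyi _]] := ram_gen_cut_descends v_ram i_cut.
have descend_i x : x \in covered E h v -> x = i.
  move=> xv; have := subsetP (covered_sub_ram_gen_cut v_ram) x xv.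
  rewrite -gen_eq => /gen_setT_descends[_ /set1P -> [_ hix eq_ix]].
  by apply/esym/eq_ix/anti_leq; rewrite hix (covered_same_height xv yv).
by move: neq_bb'; rewrite (descend_i b bv) (descend_i b' b'v) eqxx.
Qed.

Lemma ram_gen_neq_ram_gen_cut v w : ramified E h v -> ramified E h w ->
  ram_gen (rclass w) != ram_gen_cut (rclass v).
Proof.
(* Equality forces covered v \subset covered w, hence v \in <covered w>,
   while v \in rclass v is excluded from <r^->_{P \ <rclass v>}. *)
move=> v_ram w_ram; apply/eqP => gen_eq.
have in_ram_gen_w x : x \in covered E h v -> x \in ram_gen (rclass w).
  by move=> xv; rewrite gen_eq (subsetP (covered_sub_ram_gen_cut v_ram)).
have [x [_ [xv _ _]]] := card_gt1P v_ram.
have [x' x'w [_ hx'x _]] := ram_gen_descends w_ram (in_ram_gen_w x xv).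
have x'_cut : x' \in ram_gen_cut (rclass v).
  by rewrite -gen_eq (subsetP (covered_sub_ram_gen w_ram)).
have [x'' x''v [_ hx''x' _]] := ram_gen_cut_descends v_ram x'_cut.
have hx' : h x' = h x by apply: anti_leq; rewrite hx'x -(covered_same_height x''v xv).
have vw : covered E h v \subset covered E h w.
  apply/subsetP => y yv.
  have [y' y'w [_ _ eq_y'y]] := ram_gen_descends w_ram (in_ram_gen_w y yv).
  by rewrite -eq_y'y // (covered_same_height y'w x'w) hx' (covered_same_height xv yv).
have vx : covers E h v x by rewrite inE in xv.
have v_cut : v \in ram_gen_cut (rclass v).
  by rewrite -gen_eq /ram_gen rminus_rclass //; apply: covered_sub_mem_gen vx vw.
move: v_cut; rewrite inE => /andP[]; rewrite inE.
by rewrite mem_gen ?subsetT ?mem_rclass.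
Qed.

Lemma vertex_gen_connect i y : y \in vertex_gen i -> connect E y i.
Proof. by case/gen_setT_descends => _ /set1P -> []. Qed.

Lemma ram_gen_connect v y : ramified E h v -> y \in ram_gen (rclass v) -> connect E y v.
Proof.
move=> v_ram /(ram_gen_descends v_ram)[x xv [yx _ _]].
by apply: connect_trans yx (connect1 _); rewrite shrub_sym covers_edge // -inE.
Qed.

Lemma covers_in_gen b a : covers E h b a ->
  b \in vertex_gen a \/
  exists2 v, ramified E h v & a \in ram_gen (rclass v) /\ b \in ram_gen (rclass v).
Proof.
move=> ba; have [b_ram | b_nram] := boolP (ramified E h b).
  right; exists b => //; split.
    by apply: (subsetP (covered_sub_ram_gen b_ram)); rewrite inE.
  by rewrite /ram_gen rminus_rclass //; apply: covered_sub_mem_gen ba (subxx _).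
left; apply: (covered_sub_mem_gen ba); apply/subsetP => x bx; rewrite inE.
apply: contraNT b_nram => xa; apply/card_gt1P; exists x, a.
by split; rewrite // inE.
Qed.

Definition denom_sets : seq {set 'I_n} :=
  [seq vertex_gen i | i <- index_enum 'I_n] ++ [seq ram_gen r | r <- enum (Ram E h)].

Definition numer_sets : seq {set 'I_n} := [seq ram_gen_cut r | r <- enum (Ram E h)].

Lemma mem_denom_sets S : S \in denom_sets ->
  (exists i, S = vertex_gen i) \/ exists2 v, ramified E h v & S = ram_gen (rclass v).
Proof.
rewrite mem_cat => /orP[/mapP[i _ ->] | /mapP[r]]; first by left; exists i.
by rewrite mem_enum => /RamP[v v_ram ->] ->; right; exists v.
Qed.

Lemma mem_numer_sets S : S \in numer_sets ->
  exists2 v, ramified E h v & S = ram_gen_cut (rclass v).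
Proof. by case/mapP => r; rewrite mem_enum => /RamP[v v_ram ->] ->; exists v. Qed.

Lemma denom_set_neq0 S : S \in denom_sets -> S != set0.
Proof.
case/mem_denom_sets => [[i ->] | [v v_ram ->]]; apply/set0Pn.
  by exists i; apply: mem_vertex_gen.
have [x [_ [xv _ _]]] := card_gt1P v_ram.
by exists x; apply: (subsetP (covered_sub_ram_gen v_ram)).
Qed.

Lemma numer_set_neq0 S : S \in numer_sets -> S != set0.
Proof.
case/mem_numer_sets => v v_ram ->; apply/set0Pn.
have [x [_ [xv _ _]]] := card_gt1P v_ram.
by exists x; apply: (subsetP (covered_sub_ram_gen_cut v_ram)).
Qed.

Lemma numer_neq_denom_set S T : S \in numer_sets -> T \in denom_sets -> S != T.
Proof.
case/mem_numer_sets => v v_ram ->; case/mem_denom_sets => [[i ->] | [w w_ram ->]].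
  by rewrite eq_sym vertex_gen_neq_ram_gen_cut.
by rewrite eq_sym ram_gen_neq_ram_gen_cut.
Qed.

Lemma denom_set_connect S a b : S \in denom_sets -> a \in S -> b \in S -> connect E a b.
Proof.
have csym := sym_connect_sym shrub_sym.
case/mem_denom_sets => [[i ->] | [v v_ram ->]] aS bS.
  by rewrite (connect_trans (vertex_gen_connect aS)) // csym vertex_gen_connect.
by rewrite (connect_trans (ram_gen_connect v_ram aS)) // csym ram_gen_connect.
Qed.

Lemma edge_in_denom_set a b : E a b -> exists2 S, S \in denom_sets & a \in S /\ b \in S.
Proof.
have cover_case x y : covers E h y x -> exists2 S, S \in denom_sets & x \in S /\ y \in S.
  case/covers_in_gen => [yx | [v v_ram [xv yv]]].
    by exists (vertex_gen x); rewrite ?mem_cat ?map_f ?mem_index_enum ?mem_vertex_gen.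
  by exists (ram_gen (rclass v)); rewrite // mem_cat orbC map_f // mem_enum rclass_Ram.
case/edge_covers => [/cover_case[S ? [? ?]] | /cover_case //]; by exists S.
Qed.

Local Notation N := (\prod_(S <- numer_sets) linform S).
Local Notation D := (\prod_(S <- denom_sets) linform S).

Lemma fP_eq : fP E h = N%:F / D%:F.
Proof.
rewrite /fP /numer_sets /denom_sets big_cat !big_map !big_enum /=.
under eq_bigr do rewrite usum_linform.
under [X in _ * X]eq_bigr do rewrite !usum_linform.
rewrite big_split /= prodfV -!rmorph_prod /vertex_gen /ram_gen /ram_gen_cut rmorphM invfM.
by rewrite mulrCA.
Qed.

Lemma denom_neq0 : D != 0.
Proof.
by rewrite prodf_seq_neq0; apply/allP => S /denom_set_neq0; apply: linform_neq0.
Qed.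

Lemma fP_lowest_terms : lowest_terms (fP E h) N D.
Proof.
split; [exact: denom_neq0 | exact: fP_eq |].
rewrite !prod_linform; apply: mcoprime_prod; first exact/linform_primes/numer_set_neq0.
move=> _ _ /mapP[S S_num ->] /mapP[T T_den ->] /(linform_dvd_eq (denom_set_neq0 T_den)).
exact/eqP/numer_neq_denom_set.
Qed.

Lemma denom_rel_connect a b : denom_rel (fP E h) a b -> connect E a b.
Proof.
move=> [N' [D' [[nz_D' fP_eq' N'D'] [p [p_irr p_D' pa pb]]]]].
have cross_mul : N' * D = N * D'.
  move: fP_eq'; rewrite fP_eq => /eqP.
  by rewrite eqr_div ?tofrac_eq0 ?denom_neq0 // -!rmorphM tofrac_eq mulrC => /eqP.
have denom_primes := linform_primes denom_set_neq0.
have D'_D : mdvd D' (\prod_(q <- map (@linform n) denom_sets) q).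
  by apply: (mcoprime_dvd_prod denom_primes N'D'); rewrite -prod_linform cross_mul.
have [_ /mapP[S S_den ->] p_S] :=
  mirreducible_dvd_prod denom_primes p_irr (mdvd_trans p_D' D'_D).
have [_ p_nunit _] := p_irr.
have S_irr := mprime_mirreducible (denom_primes _ (map_f (@linform n) S_den)).
have [u u_unit def_p] := mdvd_mirreducible p_nunit S_irr p_S.
rewrite def_p !involves_unitl // !involves_linform in pa pb.
exact: denom_set_connect S_den pa pb.
Qed.

Lemma edge_denom_rel a b : E a b -> denom_rel (fP E h) a b.
Proof.
move=> ab; exists N, D; split; first exact: fP_lowest_terms.
have [S S_den [aS bS]] := edge_in_denom_set ab.
have [k kS] := set0Pn _ (denom_set_neq0 S_den).
exists (linform S); split; rewrite ?involves_linform //.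
  exact/mprime_mirreducible/linform_prime/kS.
by rewrite (big_rem _ S_den) /=; apply/mdvd_mulr/mdvd_refl.
Qed.

End Shrubs.

Theorem mainTheorem13 (n : nat) (E : rel 'I_n) (h : 'I_n -> nat) :
  is_shrub E h ->
  forall i j : 'I_n, connect E i j <-> pi_rel (fP E h) i j.
Proof.
move=> shrub; apply: connect_clos_rst.
- exact: shrub_sym shrub.
- exact: edge_denom_rel shrub.
- exact: denom_rel_connect shrub.
Qed.
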